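(* Let $S$ be a numerical semigroup with conductor $c$, enumerated as $S=\{0=\rho_1<\rho_2<\cdots\}$, and let $m\ge 2c-1$. Let $M=\{m_1<\cdots<m_r\}\subseteq S$ be an $(S,m,r)$-amenable set. Then (a) $m_i\le m+\rho_i$ for all $i\in\{1,\ldots,r\}$, and (b) $m_{i+1}-m_i\le\rho_2$ for all $i\in\{1,\ldots,r-1\}$.
   Context: A numerical semigroup is a submonoid of $\mathbb N$ with finite complement; its conductor $c$ is the least element of $S$ such that $c+n\in S$ for all $n\in\mathbb N$. For $x\in S$, $\mathrm D(x)=\{\alpha\in S\mid x-\alpha\in S\}$. A set $M=\{m_1<\cdots<m_r\}\subseteq S$ with $2c-1\le m=m_1$ is $(S,m,r)$-amenable if $\mathrm D(m_i)\cap[m,\infty)\subseteq M$ for all $i\in\{1,\ldots,r\}$. *)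

From mathcomp Require Import all_boot.
Set Implicit Arguments. Unset Strict Implicit. Unset Printing Implicit Defensive.

Definition numerical_semigroup (S : pred nat) : Prop :=
  S 0 /\ (forall x y, S x -> S y -> S (x + y)) /\
  (exists N, forall n, N <= n -> S n).

Definition is_conductor (S : pred nat) (c : nat) : Prop :=
  S c /\ (forall n, S (c + n)) /\
  (forall c', S c' -> (forall n, S (c' + n)) -> c <= c').

(* Enumeration S = {rho_1 < rho_2 < ...}: [is_rho S k x] means x = rho_{k+1},
   i.e. x is in S and exactly k elements of S are smaller than x
   (0-based index k). *)
Definition is_rho (S : pred nat) (k x : nat) : bool :=
  S x && (count S (iota 0 x) == k).

Definition inD (S : pred nat) (x a : nat) : bool :=
  [&& S a, a <= x & S (x - a)].

Definition amenable (S : pred nat) (c m r : nat) (M : seq nat) : Prop :=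
  size M = r /\ 0 < r /\ sorted ltn M /\ all S M /\ head 0 M = m /\
  2 * c - 1 <= m /\
  (forall i, i < r -> forall a, inD S (nth 0 M i) a -> m <= a -> a \in M).

From mathcomp Require Import all_boot.
From mathcomp Require Import zify.

Set Implicit Arguments.
Unset Strict Implicit.

(* Both parts are pigeonhole arguments on the elements of M exceeding m, all
   of which lie above the conductor.  (a) If m_i > m + rho_i, then m and the
   i numbers m_i - rho_j (j <= i) are i + 1 distinct elements of
   D(m_i) \cap [m, oo) not exceeding m_i, hence elements of M among
   m_1, ..., m_i: too many.  (b) If m_(i+1) - m_i > rho_2, then
   m_(i+1) - rho_2 is an element of D(m_(i+1)) \cap [m, oo), hence of M,
   strictly between m_i and m_(i+1). *)

Section SortedLtn.

Variable M : seq nat.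
Hypothesis sortM : sorted ltn M.

Lemma leq_nth_sorted_ltn i j : i < size M -> j < size M ->
  (nth 0 M j <= nth 0 M i) = (j <= i).
Proof.
move=> ltiM ltjM; have mono := sorted_ltn_nth ltn_trans 0 sortM.
case: (ltngtP j i) => [lt_ji | lt_ij | ->]; last exact: leqnn.
  by apply/ltnW/mono.
by apply/negbTE; rewrite -ltnNge mono.
Qed.

Lemma mem_take_sorted_ltn y i : i < size M -> y \in M ->
  y <= nth 0 M i -> y \in take i.+1 M.
Proof.
move=> ltiM /(nthP 0) [j ltjM <-]; rewrite leq_nth_sorted_ltn // => le_ji.
by rewrite -(nth_take 0 (_ : j < i.+1)) ?mem_nth // size_take_min; lia.
Qed.

Lemma uniq_size_leq_sorted_ltn (T : seq nat) i : i < size M -> uniq T ->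
  {subset T <= [pred y in M | y <= nth 0 M i]} -> size T <= i.+1.
Proof.
move=> ltiM uniqT subT.
have subT_take : {subset T <= take i.+1 M}.
  by move=> y /subT /andP [yM le_y]; apply: mem_take_sorted_ltn.
by rewrite (leq_trans (uniq_leq_size uniqT subT_take)) // size_take_min geq_minl.
Qed.

Lemma head_leq_nth_sorted_ltn i : i < size M -> head 0 M <= nth 0 M i.
Proof. by move=> ltiM; rewrite -nth0 leq_nth_sorted_ltn ?(leq_ltn_trans _ ltiM). Qed.

Lemma sorted_ltn_nth_gap y i : i.+1 < size M -> y \in M ->
  nth 0 M i < y -> y < nth 0 M i.+1 -> False.
Proof.
move=> ltiM /(nthP 0) [j ltjM <-].
rewrite !ltnNge !leq_nth_sorted_ltn ?(ltnW ltiM) //; lia.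
Qed.

End SortedLtn.

Lemma conductor_gt (S : pred nat) c m y :
  is_conductor S c -> 2 * c - 1 <= m -> m < y -> S y.
Proof. by move=> [_ [Scn _]] le_cm lt_my; rewrite -(subnKC (_ : c <= y)) //; lia. Qed.

Lemma count_iota_rho (S : pred nat) k x :
  is_rho S k x -> count S (iota 0 x.+1) = k.+1.
Proof.
by move=> /andP [Sx /eqP cntx]; rewrite -addn1 iotaD count_cat cntx /= add0n Sx addn1.
Qed.

Lemma is_rho_gt0 (S : pred nat) k x : is_rho S k.+1 x -> 0 < x.
Proof. by case: x => // /andP []. Qed.

Section Amenable.

Variables (S : pred nat) (c m r : nat) (M : seq nat).
Hypotheses (condS : is_conductor S c) (amenM : amenable S c m r M).

Lemma amenable_head_leq_nth i : i < r -> m <= nth 0 M i.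
Proof.
have [sizeM [_ [sortM [_ [headM _]]]]] := amenM.
by rewrite -headM -sizeM; apply: head_leq_nth_sorted_ltn.
Qed.

Lemma amenable_sub_mem i s : i < r -> S s -> m + s < nth 0 M i ->
  nth 0 M i - s \in M.
Proof.
have [_ [_ [_ [_ [_ [le_cm amen]]]]]] := amenM => ltir Ss lt_nth.
apply: amen ltir _ _ _; last by lia.
rewrite /inD leq_subr subKn ?Ss ?andbT; last by lia.
by apply: conductor_gt condS le_cm _; lia.
Qed.

Lemma amenable_nth_leq i x : i < r -> i < count S (iota 0 x.+1) ->
  nth 0 M i <= m + x.
Proof.
have [sizeM [_ [sortM [_ [headM _]]]]] := amenM => ltir ltiF.
rewrite leqNgt; apply/negP => bad.
pose F := filter S (iota 0 x.+1).
have memF s : s \in F -> S s && (s <= x) by rewrite mem_filter mem_iota ltnS.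
pose T := m :: [seq nth 0 M i - s | s <- F].
have uniqT : uniq T.
  have uniqF : uniq F by rewrite filter_uniq ?iota_uniq.
  rewrite /= map_inj_in_uniq; last first.
    by move=> s t /memF /andP [_ ?] /memF /andP [_ ?]; lia.
  by rewrite uniqF andbT; apply/mapP => -[s /memF /andP [_ le_sx]]; lia.
suff : size T <= i.+1 by rewrite /= size_map size_filter; lia.
rewrite -sizeM in ltir; apply: (uniq_size_leq_sorted_ltn sortM ltir uniqT) => y.
rewrite inE => /predU1P [-> | /mapP [s /memF /andP [Ss le_sx] ->]].
  rewrite inE -headM -nth0 mem_nth ?(leq_ltn_trans _ ltir) //=.
  by rewrite nth0 headM amenable_head_leq_nth -?sizeM.
by rewrite inE leq_subr andbT amenable_sub_mem -?sizeM //; lia.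
Qed.

Lemma amenable_nth_gap i x : i.+1 < r -> S x -> 0 < x ->
  nth 0 M i.+1 - nth 0 M i <= x.
Proof.
have [sizeM [_ [sortM _]]] := amenM => ltir Sx gt0x.
rewrite leqNgt; apply/negP => bad.
have ge_m := amenable_head_leq_nth (ltnW ltir).
apply: (sorted_ltn_nth_gap sortM (_ : i.+1 < size M)
          (amenable_sub_mem ltir Sx _)); rewrite ?sizeM //; lia.
Qed.

End Amenable.

Theorem proposition3p8 (S : pred nat) (c m r : nat) (M : seq nat) :
  numerical_semigroup S -> is_conductor S c -> 2 * c - 1 <= m ->
  amenable S c m r M ->
  (forall i, i < r -> forall x, is_rho S i x -> nth 0 M i <= m + x) /\
  (forall i, i.+1 < r -> forall x, is_rho S 1 x ->
     nth 0 M i.+1 - nth 0 M i <= x).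
Proof.
move=> _ condS _ amenM; split=> i ltir x rhox.
- by apply: (amenable_nth_leq condS amenM ltir); rewrite (count_iota_rho rhox).
- have /andP [Sx _] := rhox.
  exact: (amenable_nth_gap condS amenM ltir Sx (is_rho_gt0 rhox)).
Qed.
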